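(* The fully shifted sub-local transition function $\underline{\delta}:\mathrm{Sub}\to\mathrm{Conf}$ is the right Kan extension of the fully shifted local transition function $\overline{\delta}:\mathrm{Loc}\to\mathrm{Conf}$ along the inclusion $i:\mathrm{Loc}\to\mathrm{Sub}$. That is, $\underline{\delta}$ is monotonic, $\underline{\delta}\circ i\Rightarrow\overline{\delta}$, and for every monotonic $f:\mathrm{Sub}\to\mathrm{Conf}$ with $f\circ i\Rightarrow\overline{\delta}$ we have $f\Rightarrow\underline{\delta}$.
   Context: A cellular automaton is given by a group $G$, a neighborhood $N\subseteq G$ (not necessarily finite), a finite set of states $Q$ and $\delta:Q^N\to Q$. $\mathrm{Conf}$ is the set of partial functions $G\to Q$ with support $|c|$; $c\restriction S$ is restriction to $S\cap|c|$; $\mathrm{Conf}$ is partially ordered by $c\preceq c'$ iff for all $g\in|c|$, $g\in|c'|$ and $c(g)=c'(g)$. For $c\in\mathrm{Conf}$, $g\in G$, $c\blacktriangleleft g$ has support $\{h\mid g\cdot h\in|c|\}$ and $(c\blacktriangleleft g)(h)=c(g\cdot h)$. $g\cdot M=\{g\cdot m\mid m\in M\}$. $c_g=c\restriction(g\cdot N\cap|c|)$; $\det(c)=\{g\in G\mid \exists q\in Q\ \forall c'\in Q^{g\cdot N}:\ c'\restriction|c_g|=c_g\implies \delta(c'\blacktriangleleft g)=q\}$ and $q_{c,g}$ is the unique such $q$. $\mathrm{Loc}=\bigcup_{g\in G}(\{g\}\times Q^{g\cdot N})$ with the trivial order (equality); $\overline{\delta}(g,c)$ is the configuration with support $\{g\}$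 and value $\delta(c\blacktriangleleft g)$. $\mathrm{Sub}=\bigcup_{g\in G,\,M\subseteq N}(\{g\}\times Q^{g\cdot M})$ ordered by $(g,c)\preceq(g',c')$ iff $g=g'$ and $c\preceq c'$; $\mathrm{Loc}\subseteq\mathrm{Sub}$. $\underline{\delta}(g,c)$ is the configuration with support $\{g\}\cap\det(c)$ and, if $g\in\det(c)$, value $q_{c,g}$. For posets $X,Y$, $f:X\to Y$ is monotonic if $x\preceq x'\Rightarrow f(x)\preceq f(x')$; for monotonic $f,f'$, $f\Rightarrow f'$ iff $f(x)\preceq f'(x)$ for all $x$. Given posets $A,B,C$ and monotonic $i:A\to B$, $f:A\to C$, a monotonic $g:B\to C$ is the right Kan extension of $f$ along $i$ if it is the $\Rightarrow$-maximum of $\{h:B\to C\text{ monotonic}\mid h\circ i\Rightarrow f\}$. *)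

From mathcomp Require Import all_boot.
From Stdlib Require Import ClassicalDescription ClassicalEpsilon.

Set Implicit Arguments.
Unset Strict Implicit.

Record group := Group {
  gcar :> Type;
  gmul : gcar -> gcar -> gcar;
  gone : gcar;
  ginv : gcar -> gcar;
  gmulA : forall x y z, gmul x (gmul y z) = gmul (gmul x y) z;
  gmul1 : forall x, gmul gone x = x;
  gmulV : forall x, gmul (ginv x) x = gone }.

Definition monotone {X Y : Type} (leX : X -> X -> Prop) (leY : Y -> Y -> Prop)
  (f : X -> Y) : Prop := forall x x', leX x x' -> leY (f x) (f x').

Definition nat_le {X Y : Type} (leY : Y -> Y -> Prop) (f f' : X -> Y) : Prop :=
  forall x, leY (f x) (f' x).

Definition right_Kan {A B C : Type} (leA : A -> A -> Prop) (leB : B -> B -> Prop)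
  (leC : C -> C -> Prop) (i : A -> B) (f : A -> C) (g : B -> C) : Prop :=
  [/\ monotone leA leB i, monotone leA leC f,
      monotone leB leC g,
      nat_le leC (fun a => g (i a)) f &
      forall h : B -> C, monotone leB leC h ->
        nat_le leC (fun a => h (i a)) f -> nat_le leC h g].

Section CA.
Variables (G : group) (Q : finType) (N : G -> Prop)
          (delta : ({h : G | N h} -> Q) -> Q).

Definition Conf := G -> option Q.
Definition supp (c : Conf) : G -> Prop := fun x => c x <> None.
Definition has_supp (c : Conf) (S : G -> Prop) := forall x, supp c x <-> S x.
Definition restr (c : Conf) (S : G -> Prop) : Conf :=
  fun x => if excluded_middle_informative (S x) then c x else None.
Definition conf_le (c c' : Conf) : Prop :=
  forall g, supp c g -> supp c' g /\ c g = c' g.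
Definition shift (c : Conf) (g : G) : Conf := fun h => c (gmul g h).
Definition lmul (g : G) (M : G -> Prop) : G -> Prop :=
  fun x => exists m, M m /\ x = gmul g m.

(* Loc and Sub: pairs (g, c) with c ∈ Q^{g·N}, resp. c ∈ Q^{g·M}, M ⊆ N. *)
Definition is_Loc (p : G * Conf) : Prop := has_supp p.2 (lmul p.1 N).
Definition Loc := {p : G * Conf | is_Loc p}.
Definition is_Sub (p : G * Conf) : Prop :=
  exists M : G -> Prop, (forall x, M x -> N x) /\ has_supp p.2 (lmul p.1 M).
Definition Sub := {p : G * Conf | is_Sub p}.

Definition Loc_le (x y : Loc) : Prop := x = y.
Definition Sub_le (x y : Sub) : Prop :=
  (sval x).1 = (sval y).1 /\ conf_le (sval x).2 (sval y).2.

Lemma Loc_Sub (p : G * Conf) : is_Loc p -> is_Sub p.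
Proof. by move=> H; exists N; split. Qed.

Definition incl (x : Loc) : Sub := exist _ (sval x) (Loc_Sub (proj2_sig x)).

Lemma shift_total (g : G) (c : Conf) :
  has_supp c (lmul g N) -> forall h, N h -> supp (shift c g) h.
Proof. by move=> H h Nh; apply/H; exists h. Qed.

Definition conf_val (c : Conf) (M : G -> Prop) (H : forall h, M h -> supp c h)
  : {h : G | M h} -> Q :=
  fun x => match c (sval x) as o return (o <> None -> Q) with
           | Some q => fun _ => q
           | None => fun E => False_rect _ (E erefl)
           end (H _ (proj2_sig x)).

Definition loc_value (g : G) (c : Conf) (H : has_supp c (lmul g N)) : Q :=
  delta (conf_val (shift_total H)).

Definition delta_bar (x : Loc) : Conf :=
  fun y => if excluded_middle_informative (y = (sval x).1)
           then Some (loc_value (proj2_sig x)) else None.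

Definition c_at (c : Conf) (g : G) : Conf :=
  restr c (fun x => lmul g N x /\ supp c x).

Definition det_with (c : Conf) (g : G) (q : Q) : Prop :=
  forall (c' : Conf) (H : has_supp c' (lmul g N)),
    restr c' (supp (c_at c g)) = c_at c g -> loc_value H = q.

Definition det (c : Conf) (g : G) : Prop := exists q, det_with c g q.

Definition q_cg (c : Conf) (g : G) : option Q :=
  match excluded_middle_informative (det c g) with
  | left H => Some (proj1_sig (constructive_indefinite_description _ H))
  | right _ => None
  end.

Definition delta_under (x : Sub) : Conf :=
  fun y => if excluded_middle_informative (y = (sval x).1)
           then q_cg (sval x).2 (sval x).1 else None.

End CA.

From Pilot Require Import Defs.
From mathcomp Require Import all_boot.
From Stdlib Require Import ClassicalDescription ClassicalEpsilon FunctionalExtensionality.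

(* The central notion is a completion of a pair (g, c): a configuration c'
   agreeing with c_g on |c_g|.  When c' has support g·N, the pair (g, c') is a
   local pair, and g ∈ det(c) with value q says exactly that δ(c' ◂ g) = q for
   every such completion.  We first show:
   - completions on g·N always exist (fill the holes with a constant state),
     so the value q_{c,g} is unique and q_cg is characterised by det_with;
   - the set of completions shrinks as c grows, so det_with is monotone in c;
   - for (g, c) ∈ Sub every completion of c extends c, and c completes itself.
   Both δ̄ and δ̲ are "point" configurations supported in a single cell, which
   reduces ⪯ between them to a comparison of values.  The five clauses of
   right_Kan are then separate lemmas; the only substantial one is
   maximality: if h is monotone with h ∘ i ⇒ δ̄, then h(g, c) ⪯ δ̄(g, c') for
   every local completion c' of c, so any value of h(g, c) sits at g and is
   δ(c' ◂ g) for all such c', i.e. it is q_{c,g}. *)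

Ltac decide_tests := repeat match goal with
  | |- context[excluded_middle_informative ?P] =>
      destruct (excluded_middle_informative P)
  | H : context[excluded_middle_informative ?P] |- _ =>
      destruct (excluded_middle_informative P)
  end.

Section Configurations.
Context {G : group} {Q : finType}.

Lemma conf_le_refl (c : Conf G Q) : conf_le c c.
Proof. by []. Qed.

Lemma conf_le_trans {a b c : Conf G Q} :
  conf_le a b -> conf_le b c -> conf_le a c.
Proof.
move=> Hab Hbc z Hz; case: (Hab z Hz) => Hb ->.
exact: Hbc.
Qed.

(* The configuration with support ⊆ {g} taking value o at g; both δ̄ and δ̲
   produce configurations of this shape. *)
Definition point (g : G) (o : option Q) : Conf G Q :=
  fun y => if excluded_middle_informative (y = g) then o else None.

Lemma supp_point {g y : G} {o : option Q} :
  supp (point g o) y -> y = g /\ point g o y = o.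
Proof. by rewrite /supp /point; case: excluded_middle_informative. Qed.

Lemma point_at (g : G) (o : option Q) : point g o g = o.
Proof. by rewrite /point; case: excluded_middle_informative. Qed.

Lemma point_le (g : G) (o o' : option Q) :
  (forall q, o = Some q -> o' = Some q) -> conf_le (point g o) (point g o').
Proof.
move=> Hoo' y Hy; have [Eyg Ey] := supp_point Hy; subst y.
rewrite /supp Ey in Hy *; case: o Hoo' Hy {Ey} => [q|] Hoo' Hy; last by case: Hy.
by rewrite point_at (Hoo' q).
Qed.

End Configurations.

Section Transition.
Variables (G : group) (Q : finType) (N : G -> Prop)
          (delta : ({h : G | N h} -> Q) -> Q).

Definition completes (g : G) (c c' : Conf G Q) : Prop :=
  restr c' (supp (c_at N c g)) = c_at N c g.

Definition const_completion (c : Conf G Q) (g : G) (d : Q) : Conf G Q :=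
  fun x => if excluded_middle_informative (lmul g N x) then
             if c x is Some v then Some v else Some d
           else None.

Lemma const_completion_supp c g d : has_supp (const_completion c g d) (lmul g N).
Proof.
move=> x; rewrite /supp /const_completion.
by case: excluded_middle_informative => H; split=> //; case: (c x).
Qed.

Lemma const_completion_completes c g d : completes g c (const_completion c g d).
Proof.
apply: functional_extensionality => x.
rewrite /completes /c_at /const_completion /supp /restr.
decide_tests; cbn in *; try tauto; destruct (c x); tauto.
Qed.

(* Since completions exist, the value witnessing g ∈ det(c) is unique. *)
Lemma det_with_unique c g q1 q2 :
  det_with delta c g q1 -> det_with delta c g q2 -> q1 = q2.
Proof.
move=> H1 H2.
have Hs := const_completion_supp c g q1.
have Hc := const_completion_completes c g q1.
by rewrite -(H1 _ Hs Hc) (H2 _ Hs Hc).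
Qed.

Lemma q_cg_spec c g q : q_cg delta c g = Some q <-> det_with delta c g q.
Proof.
rewrite /q_cg; case: excluded_middle_informative => [Hdet|Hndet].
  case: constructive_indefinite_description => q' Hq' /=.
  split=> [[<-] //|Hq]; congr Some; exact: det_with_unique Hq' Hq.
by split=> // Hq; case: Hndet; exists q.
Qed.

Lemma completes_antitone {g c c'' c'} :
  conf_le c c'' -> completes g c'' c' -> completes g c c'.
Proof.
move=> Hle E; apply: functional_extensionality => x.
have Hlex := Hle x; move: (f_equal (fun f => f x) E) => /=.
rewrite /c_at /supp /restr in Hlex *.
decide_tests; cbn in *; try tauto; try congruence;
  destruct (c x); try tauto; try congruence.
by move=> ->; case: Hlex.
Qed.

Lemma det_with_mono {c c'' g q} :
  conf_le c c'' -> det_with delta c g q -> det_with delta c'' g q.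
Proof. by move=> Hle Hq c' H E; apply: Hq c' H (completes_antitone Hle E). Qed.

Lemma completes_self c g : completes g c c.
Proof.
apply: functional_extensionality => x.
by rewrite /completes /c_at /supp /restr; decide_tests; cbn in *; tauto.
Qed.

Lemma Sub_supp {g} {c : Conf G Q} :
  is_Sub N (g, c) -> forall z, supp c z -> lmul g N z.
Proof.
move=> [M [MN HM]] z /HM [m [Mm ->]].
by exists m; split=> //; apply: MN.
Qed.

Lemma completes_le {g c c'} : (forall z, supp c z -> lmul g N z) ->
  completes g c c' -> conf_le c c'.
Proof.
move=> Hs E z Hz.
move: (f_equal (fun f => f z) E) (Hs z Hz) => /=.
rewrite /c_at /supp /restr in Hz *.
by decide_tests; cbn in *; try tauto; move=> ->.
Qed.

Lemma delta_under_point (x : Defs.Sub Q N) :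
  delta_under delta x = point (sval x).1 (q_cg delta (sval x).2 (sval x).1).
Proof. by []. Qed.

Lemma delta_bar_point (x : Loc Q N) :
  delta_bar delta x = point (sval x).1 (Some (loc_value delta (proj2_sig x))).
Proof. by []. Qed.

Lemma incl_monotone : monotone (@Loc_le G Q N) (@Sub_le G Q N) (@incl G Q N).
Proof. by move=> x y ->; split. Qed.

Lemma delta_bar_monotone :
  monotone (@Loc_le G Q N) (@conf_le G Q) (delta_bar delta).
Proof. by move=> x y ->; apply: conf_le_refl. Qed.

Lemma delta_under_monotone :
  monotone (@Sub_le G Q N) (@conf_le G Q) (delta_under delta).
Proof.
move=> [[g c] Hc] [[g' c''] Hc''] [/= eg Hle]; subst g'.
rewrite !delta_under_point /=; apply: point_le => q /q_cg_spec Hq.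
exact/q_cg_spec/(det_with_mono Hle Hq).
Qed.

Lemma delta_under_incl :
  nat_le (@conf_le G Q) (fun a => delta_under delta (incl a)) (delta_bar delta).
Proof.
move=> [[g c] Hc]; rewrite delta_under_point delta_bar_point /=.
apply: point_le => q /q_cg_spec Hq; congr Some.
exact: Hq c Hc (completes_self c g).
Qed.

Section Maximality.
Variable h : Defs.Sub Q N -> Conf G Q.
Hypothesis h_mono : monotone (@Sub_le G Q N) (@conf_le G Q) h.
Hypothesis h_below :
  nat_le (@conf_le G Q) (fun a => h (incl a)) (delta_bar delta).

Lemma h_below_completion {g c} (Hc : is_Sub N (g, c)) {c'}
    (H : has_supp c' (lmul g N)) :
  completes g c c' -> forall z, supp (h (exist _ (g, c) Hc)) z ->
    z = g /\ h (exist _ (g, c) Hc) z = Some (loc_value delta H).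
Proof.
move=> Hcomp z Hz.
pose a : Loc Q N := exist _ (g, c') H.
have Hxa : Sub_le (exist _ (g, c) Hc) (incl a).
  by split=> //; exact: completes_le (Sub_supp Hc) Hcomp.
have [Ha ->] := conf_le_trans (h_mono _ _ Hxa) (h_below a) z Hz.
by move: Ha; rewrite delta_bar_point => /supp_point.
Qed.

(* Every value of h(g, c) is a value witnessing g ∈ det(c). *)
Lemma delta_under_maximal : nat_le (@conf_le G Q) h (delta_under delta).
Proof.
move=> [[g c] Hc] y Hy.
case Ev: (h _ y) Hy => [v|] Hy; last by case: Hy; rewrite Ev.
have [Eyg _] := h_below_completion Hc (const_completion_supp c g v)
                  (const_completion_completes c g v) y Hy.
subst y.
have Hdet : det_with delta c g v.
  move=> c' H E; have [_] := h_below_completion Hc H E g Hy.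
  by rewrite Ev => -[].
rewrite delta_under_point /= (proj2 (q_cg_spec c g v) Hdet) /supp !point_at.
by split.
Qed.

End Maximality.
End Transition.

Theorem mainTheorem15 (G : group) (Q : finType) (N : G -> Prop)
  (delta : ({h : G | N h} -> Q) -> Q) :
  right_Kan (@Loc_le G Q N) (@Sub_le G Q N) (@conf_le G Q)
    (@incl G Q N) (delta_bar delta) (delta_under delta).
Proof.
split.
- exact: incl_monotone.
- exact: delta_bar_monotone.
- exact: delta_under_monotone.
- exact: delta_under_incl.
- move=> h h_mono h_below; exact: delta_under_maximal.
Qed.
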